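(* Let $\mathbb{F}$ be a field and $n\ge3$. Let $\mathcal{A}_n$ be the $n\times n$ znz-pattern whose nonzero entries are exactly the diagonal positions $(i,i)$ for $1\le i\le n$, the superdiagonal positions $(i,i+1)$ for $1\le i\le n-1$, and the position $(n,1)$. Then $\mathcal{A}_n$ is potentially nilpotent over $\mathbb{F}$ if and only if $\mathbb{F}$ contains all the $n$-th roots of unity.
   Context: A znz-pattern is an $n\times n$ matrix with entries in $\{*,0\}$; a realization over $\mathbb{F}$ is a matrix in $M_n(\mathbb{F})$ whose nonzero entries are exactly at the $*$ positions; potentially nilpotent over $\mathbb{F}$ means some realization is nilpotent. $\mathbb{F}$ contains all the $n$-th roots of unity if $x^n-1$ factors into $n$ linear factors over $\mathbb{F}$. *)

From HB Require Import structures.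
From mathcomp Require Import all_boot all_order all_algebra.
Set Implicit Arguments. Unset Strict Implicit. Unset Printing Implicit Defensive.
Import GRing.Theory.
Local Open Scope ring_scope.

(* A znz-pattern: n x n matrix of booleans, true = "*" (nonzero), false = 0. *)
Definition znz_pattern (n : nat) := 'M[bool]_n.

Definition realization (F : fieldType) (n : nat) (P : znz_pattern n)
  (A : 'M[F]_n) : Prop :=
  forall i j : 'I_n, (A i j != 0) = P i j.

(* Matrix power via iterated matrix product (works for every n). *)
Definition mxpow (F : fieldType) (n : nat) (A : 'M[F]_n) (k : nat) : 'M[F]_n :=
  iter k (fun B => A *m B) 1%:M.

Definition mx_nilpotent (F : fieldType) (n : nat) (A : 'M[F]_n) : Prop :=
  exists k : nat, mxpow A k = 0.

Definition potentially_nilpotent (F : fieldType) (n : nat) (P : znz_pattern n) : Prop :=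
  exists A : 'M[F]_n, realization P A /\ mx_nilpotent A.

Definition contains_all_nth_roots_of_unity (F : fieldType) (n : nat) : Prop :=
  exists s : seq F, ('X^n - 1 : {poly F}) = \prod_(a <- s) ('X - a%:P).

(* The pattern A_n (0-based indices): diagonal (i,i), superdiagonal (i,i+1),
   and the corner (n-1, 0). *)
Definition pattern_An (n : nat) : znz_pattern n :=
  \matrix_(i < n, j < n)
    [|| (i : nat) == j, (i : nat).+1 == j | ((i : nat) == n.-1) && ((j : nat) == 0%N)].

From HB Require Import structures.
From mathcomp Require Import all_boot all_order all_algebra.
Set Implicit Arguments. Unset Strict Implicit. Unset Printing Implicit Defensive.
Import GRing.Theory.
Local Open Scope ring_scope.

(* Write n = m + 1 and let A realize A_n, with diagonal entries a_k,
   superdiagonal entries b_k and corner entry c.  Row k of A - a_k I is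
   b_k e_(k+1) (indices mod n, with c in place of b_m), so walking once around
   the cycle, and using that the factors commute, gives the key identity
       p(A) = w I,   p = prod_k (X - a_k),   w = c b_0 ... b_(m-1).
   Moreover row 0 of A^m ends in b_0 ... b_(m-1) != 0, so A^m != 0.
   - If A is nilpotent, its minimal polynomial is then X^n, which must divide
     the monic degree-n annihilator p - w; hence p = X^n + w.  Evaluating at
     the root a_0 != 0 gives w = -a_0^n, and rescaling X by a_0 shows that
     X^n - 1 = prod_k (X - a_k / a_0) splits.
   - Conversely, if X^n - 1 = prod_k (X - r_k), the realization with diagonal
     r_k, superdiagonal 1 and corner -1 has p = X^n - 1 and w = -1, so
     A^n - I = -I, i.e. A^n = 0.
   The file first proves the general facts (matrix powers, rescaling of a
   split polynomial, nilpotent matrices with a monic annihilator of degree n),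
   then the cycle identities for an arbitrary realization, then the two
   directions, and finally the theorem. *)

Lemma mxpowE (F : fieldType) (n : nat) (A : 'M[F]_n) (k : nat) : mxpow A k = A ^+ k.
Proof.
elim: k => [|k IH]; first by rewrite /mxpow /= expr0.
by rewrite /mxpow iterS -/(mxpow A k) IH exprS mulmxE.
Qed.

Lemma comp_prod_XsubC_scale (F : fieldType) (s : seq F) (c : F) : c != 0 ->
  (\prod_(a <- s) ('X - a%:P)) \Po (c *: 'X)
  = c ^+ size s *: \prod_(a <- s) ('X - (a / c)%:P).
Proof.
move=> cnz; elim: s => [|a s IH]; first by rewrite !big_nil comp_polyC expr0 scale1r.
have lin : ('X - a%:P) \Po (c *: 'X) = c *: ('X - (a / c)%:P).
  by rewrite comp_polyB comp_polyX comp_polyC scalerBr scale_polyC mulrC divfK.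
by rewrite !big_cons comp_polyM IH lin -scalerAr -scalerAl scalerA -exprSr.
Qed.

Lemma nilpotent_monic_annihilator (F : fieldType) (m k : nat) (A : 'M[F]_m.+1)
    (q : {poly F}) :
  A ^+ k = 0 -> A ^+ m != 0 -> q \is monic -> size q = m.+2 -> horner_mx A q = 0 ->
  q = 'X^(m.+1).
Proof.
move=> Ak Am q_monic q_size qA.
have min_dvd_Xk : mxminpoly A %| ('X - 0%:P) ^+ k.
  by apply/mxminpoly_minP; rewrite subr0 rmorphXn /= horner_mx_X Ak.
have [l _ min_eq] := dvdp_exp_XsubCP min_dvd_Xk.
have Al : A ^+ l = 0.
  apply/eqP; rewrite -[A]horner_mx_X -rmorphXn; apply/eqP/mxminpoly_minP.
  by rewrite (eqp_dvdl _ min_eq) subr0 dvdpp.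
have ml : (m < l)%N.
  rewrite ltnNge; apply: contra Am => lm.
  have -> : A ^+ m = A ^+ (m - l) * A ^+ l by rewrite -exprD subnK.
  by rewrite Al mulr0.
have Xm_dvd_q : ('X - 0%:P) ^+ m.+1 %| q.
  apply: dvdp_trans (dvdp_exp2l _ ml) _; rewrite -(eqp_dvdl _ min_eq).
  exact: mxminpoly_min.
have := dvdp_size_eqp Xm_dvd_q; rewrite subr0 size_polyXn q_size eqxx => /esym.
by rewrite eqp_monic ?monicXn // => /eqP.
Qed.

Section CyclicPattern.
Variables (F : fieldType) (m : nat) (A : 'M[F]_m.+1).

Definition diag_at (k : nat) : F := A (inord k) (inord k).
Definition super_at (k : nat) : F := A (inord k) (inord k.+1).
Definition corner : F := A (inord m) (inord 0).
Definition shifted (k : nat) : 'M[F]_m.+1 := A - (diag_at k)%:M.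
Definition shifted_prod : 'M[F]_m.+1 := \prod_(0 <= k < m.+1) shifted k.

Definition cycle_weight : F := corner * \prod_(0 <= k < m) super_at k.
Definition diag_seq : seq F := [seq diag_at k | k <- iota 0 m.+1].
Definition diag_poly : {poly F} := \prod_(a <- diag_seq) ('X - a%:P).

Hypothesis A_real : realization (pattern_An m.+1) A.
Hypothesis m_gt0 : (0 < m)%N.

Lemma pattern_entry_neq0 (i j : 'I_m.+1) :
  (A i j != 0) = [|| (i : nat) == j, (i : nat).+1 == j | ((i : nat) == m) && ((j : nat) == 0%N)].
Proof. by rewrite A_real mxE. Qed.

Lemma pattern_entry_eq0 (i j : 'I_m.+1) :
  ~~ [|| (i : nat) == j, (i : nat).+1 == j | ((i : nat) == m) && ((j : nat) == 0%N)] ->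
  A i j = 0.
Proof. by rewrite -pattern_entry_neq0 negbK => /eqP. Qed.

Lemma diag_at_neq0 (k : nat) : (k <= m)%N -> diag_at k != 0.
Proof. by move=> km; rewrite /diag_at pattern_entry_neq0 !inordK ?eqxx. Qed.

Lemma super_at_neq0 (k : nat) : (k < m)%N -> super_at k != 0.
Proof.
by move=> km; rewrite /super_at pattern_entry_neq0 !inordK ?eqxx ?orbT // ltnW.
Qed.

Lemma super_prod_neq0 (t : nat) : (t <= m)%N -> \prod_(0 <= k < t) super_at k != 0.
Proof.
move=> tm; rewrite prodf_seq_neq0; apply/allP => k.
by rewrite mem_index_iota => /andP[_ kt]; apply: super_at_neq0 (leq_trans kt tm).
Qed.

Local Notation e k := (delta_mx 0 (inord k) : 'rV[F]_m.+1).

Lemma row_shifted_super (k : nat) : (k < m)%N -> row (inord k) (shifted k) = super_at k *: e k.+1.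
Proof.
move=> km; have ek : (inord k : 'I_m.+1) = k :> nat by rewrite inordK // ltnW.
have ek1 : (inord k.+1 : 'I_m.+1) = k.+1 :> nat by rewrite inordK.
apply/rowP => j; rewrite !mxE /diag_at /super_at -!val_eqE /= ek ek1.
have [jk|jk] := eqVneq (j : nat) k.
  have -> : j = inord k by apply/val_inj; rewrite /= ek.
  by rewrite mulr1n subrr ek (ltn_eqF (ltnSn k)) mulr0.
rewrite mulr0n subr0; have [jk1|jk1] := eqVneq (j : nat) k.+1.
  have -> : j = inord k.+1 by apply/val_inj; rewrite /= ek1.
  by rewrite mulr1n mulr1.
rewrite mulr0n mulr0 pattern_entry_eq0 //= ek !(eq_sym _ (nat_of_ord j)) (negbTE jk) (negbTE jk1).
by rewrite (ltn_eqF km).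
Qed.

(* Row m of A - a_mm I is c e_0; here 0 < m keeps the corner off the diagonal. *)
Lemma row_shifted_corner : row (inord m) (shifted m) = corner *: e 0.
Proof.
have em : (inord m : 'I_m.+1) = m :> nat by rewrite inordK.
have e0 : (inord 0 : 'I_m.+1) = 0%N :> nat by rewrite inordK.
apply/rowP => j; rewrite !mxE /diag_at /corner -!val_eqE /= em e0.
have [jm|jm] := eqVneq (j : nat) m.
  have -> : j = inord m by apply/val_inj; rewrite /= em.
  by rewrite mulr1n subrr em (gtn_eqF m_gt0) mulr0.
rewrite mulr0n subr0; have [j0|j0] := eqVneq (j : nat) 0%N.
  have -> : j = inord 0 by apply/val_inj; rewrite /= e0.
  by rewrite mulr1n mulr1.
rewrite mulr0n mulr0 pattern_entry_eq0 //= em !(eq_sym _ (nat_of_ord j)) (negbTE jm) (negbTE j0) andbF orbF.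
by rewrite ltn_eqF.
Qed.

(* All the A - a_kk I are polynomials in A, hence commute. *)
Lemma shifted_comm (i j : nat) : GRing.comm (shifted i) (shifted j).
Proof.
have scalar_comm (B : 'M[F]_m.+1) (b : F) : GRing.comm B b%:M.
  by rewrite /GRing.comm -!mulmxE scalar_mxC.
apply: commrB; last exact: scalar_comm.
by apply: commr_sym; apply: commrB; [apply: commr_refl | apply: scalar_comm].
Qed.

Lemma row0_mul_shifted_prod (t : nat) : (t <= m)%N ->
  e 0 *m \prod_(0 <= k < t) shifted k = (\prod_(0 <= k < t) super_at k) *: e t.
Proof.
elim: t => [_|t IH tm]; first by rewrite !big_geq // scale1r; apply: mulmx1.
have -> : \prod_(0 <= k < t.+1) shifted k = (\prod_(0 <= k < t) shifted k) *m shifted t.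
  by rewrite big_nat_recr.
rewrite mulmxA (IH (ltnW tm)) -scalemxAl -rowE row_shifted_super //.
by rewrite big_nat_recr //= scalerA.
Qed.

(* Every row j of the full product is the weight of the cycle times e_j:
   row 0 by walking the whole cycle, row j+1 from row j by commutation. *)
Lemma row_shifted_prod (j : nat) : (j <= m)%N -> row (inord j) shifted_prod = cycle_weight *: e j.
Proof.
elim: j => [_|j IH jm].
  have -> : shifted_prod = (\prod_(0 <= k < m) shifted k) *m shifted m.
    by rewrite /shifted_prod big_nat_recr.
  rewrite rowE mulmxA row0_mul_shifted_prod // -scalemxAl -rowE row_shifted_corner.
  by rewrite scalerA mulrC.
apply: (scalerI (super_at_neq0 jm)).
have shifted_prod_comm : shifted j *m shifted_prod = shifted_prod *m shifted j.
  by apply: commr_prod => i _; apply: shifted_comm.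
rewrite rowE scalemxAl -row_shifted_super // rowE -mulmxA shifted_prod_comm mulmxA -rowE.
by rewrite (IH (ltnW jm)) -scalemxAl -rowE row_shifted_super // !scalerA mulrC.
Qed.

Lemma horner_diag_poly : horner_mx A diag_poly = cycle_weight%:M.
Proof.
have -> : horner_mx A diag_poly = shifted_prod.
  rewrite /diag_poly /diag_seq big_map rmorph_prod; apply: eq_bigr => k _.
  by rewrite rmorphB /= horner_mx_X horner_mx_C.
apply/row_matrixP => i; rewrite -[i]inord_val row_shifted_prod; last by rewrite -ltnS.
by rewrite rowE mul_mx_scalar.
Qed.

(* For t <= m, the first row of A^t vanishes beyond column t, where its
   entry is b_0 ... b_(t-1): the corner entry cannot be reached in fewer than n steps. *)
Lemma pow_first_row (t : nat) : (t <= m)%N ->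
  (A ^+ t) (inord 0) (inord t) = \prod_(0 <= k < t) super_at k /\
  forall u : 'I_m.+1, (t < u)%N -> (A ^+ t) (inord 0) u = 0.
Proof.
have e0 : (inord 0 : 'I_m.+1) = 0%N :> nat by rewrite inordK.
elim: t => [_|t IH tm].
  rewrite expr0 big_geq // !mxE eqxx; split => // u u_gt0.
  by rewrite !mxE -val_eqE /= e0 eq_sym (negbTE (lt0n_neq0 u_gt0)).
have [IH_diag IH_zero] := IH (ltnW tm).
have et : (inord t : 'I_m.+1) = t :> nat by rewrite inordK // ltnW.
have et1 : (inord t.+1 : 'I_m.+1) = t.+1 :> nat by rewrite inordK.
(* Row 0 of A^t is supported on columns v <= t, and A v u = 0 for v < u unless u = v + 1. *)
have other_cols (u v : 'I_m.+1) : (t < u)%N -> (v : nat).+1 != u ->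
    (A ^+ t) (inord 0) v * A v u = 0.
  move=> tu vu; have [tv|vt] := ltnP t v; first by rewrite IH_zero // mul0r.
  rewrite pattern_entry_eq0 ?mulr0 //= (negbTE vu) orFb negb_or; apply/andP; split.
  - by rewrite neq_ltn (leq_ltn_trans vt tu).
  - by rewrite negb_and -lt0n (leq_ltn_trans _ tu) ?orbT.
split.
  rewrite exprSr -mulmxE mxE (bigD1 (inord t)) //= IH_diag big_nat_recr //=.
  rewrite [X in _ + X]big1 ?addr0 //.
  move=> v vt; apply: other_cols; first by rewrite et1.
  by rewrite et1 eqSS; apply: contra vt => /eqP vt; apply/eqP/val_inj; rewrite /= et.
move=> u tu; rewrite exprSr -mulmxE mxE big1 // => v _.
have [tv|vt] := ltnP t v; first by rewrite IH_zero // mul0r.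
by apply: other_cols (ltnW tu) _; rewrite neq_ltn (leq_ltn_trans _ tu).
Qed.

Lemma pow_m_neq0 : A ^+ m != 0.
Proof.
have [first_entry _] := pow_first_row (leqnn m).
apply: contraNneq (super_prod_neq0 (leqnn m)) => Am0.
by rewrite -first_entry Am0 mxE.
Qed.

Lemma diag_poly_nilpotent (k : nat) : A ^+ k = 0 -> diag_poly = 'X^(m.+1) + cycle_weight%:P.
Proof.
move=> Ak; have p_size : size diag_poly = m.+2.
  by rewrite size_prod_XsubC size_map size_iota.
have shifted_size : size (diag_poly - cycle_weight%:P) = m.+2.
  by rewrite size_polyDl p_size // size_polyN size_polyC; case: (_ != 0).
have shifted_monic : diag_poly - cycle_weight%:P \is monic.
  rewrite monicE lead_coefDl ?p_size ?size_polyN ?size_polyC; last by case: (_ != 0).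
  exact: monic_prod_XsubC.
have shifted_root : horner_mx A (diag_poly - cycle_weight%:P) = 0.
  by rewrite rmorphB /= horner_diag_poly horner_mx_C subrr.
rewrite -(nilpotent_monic_annihilator Ak pow_m_neq0 shifted_monic shifted_size shifted_root).
by rewrite subrK.
Qed.

Lemma roots_of_unity_of_nilpotent (k : nat) : A ^+ k = 0 ->
  contains_all_nth_roots_of_unity F m.+1.
Proof.
move=> Ak; set d := diag_at 0; have d_neq0 : d != 0 by apply: diag_at_neq0.
have p_eq := diag_poly_nilpotent Ak.
have weight_eq : cycle_weight = - d ^+ m.+1.
  have : root diag_poly d by rewrite root_prod_XsubC; apply: map_f; rewrite mem_iota.
  by rewrite p_eq rootE hornerD hornerXn hornerC addrC addr_eq0 => /eqP.
exists [seq a / d | a <- diag_seq]; rewrite big_map.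
apply: (scalerI (expf_neq0 m.+1 d_neq0)).
have diag_size : size diag_seq = m.+1 by rewrite size_map size_iota.
rewrite -[in RHS]diag_size -comp_prod_XsubC_scale // -/diag_poly p_eq.
by rewrite comp_polyD comp_polyC comp_Xn_poly exprZn weight_eq scalerBr -alg_polyC scaleNr.
Qed.

End CyclicPattern.

Section RootCycle.
Variables (F : fieldType) (m : nat) (r : seq F).
Hypothesis m_gt0 : (0 < m)%N.
Hypothesis r_split : ('X^(m.+1) - 1 : {poly F}) = \prod_(a <- r) ('X - a%:P).

Definition root_cycle_mx : 'M[F]_m.+1 :=
  \matrix_(i, j) (if (i : nat) == j then r`_i else if (i : nat).+1 == j then 1
                  else if ((i : nat) == m) && ((j : nat) == 0%N) then -1 else 0).

Lemma size_roots : size r = m.+1.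
Proof. by apply/eqP; rewrite -eqSS -(size_prod_XsubC r id) -r_split size_Xn_sub_1. Qed.

Lemma root_neq0 (i : nat) : (i < m.+1)%N -> r`_i != 0.
Proof.
move=> im; apply: contraTneq isT => ri0.
have : root ('X^(m.+1) - 1 : {poly F}) r`_i.
  by rewrite r_split root_prod_XsubC mem_nth ?size_roots.
by rewrite rootE hornerD hornerN hornerXn hornerC ri0 expr0n /= sub0r oppr_eq0 oner_eq0.
Qed.

Lemma root_cycle_mx_real : realization (pattern_An m.+1) root_cycle_mx.
Proof.
move=> i j; rewrite !mxE.
have [_|_] := eqVneq (i : nat) j; first exact: root_neq0.
have [_|_] := eqVneq (i : nat).+1 j; first by rewrite oner_eq0.
by case: (_ && _); rewrite ?oppr_eq0 ?oner_eq0 ?eqxx.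
Qed.

(* Backward direction: here p = X^n - 1 and w = -1, so A^n - I = -I. *)
Lemma root_cycle_mx_nilpotent : root_cycle_mx ^+ m.+1 = 0.
Proof.
set A := root_cycle_mx.
have diag_seq_eq : diag_seq A = r.
  rewrite -[RHS](mkseq_nth 0) size_roots /diag_seq /mkseq; apply/eq_in_map => k.
  by rewrite mem_iota => /andP[_ km]; rewrite /diag_at mxE eqxx inordK.
have weight_eq : cycle_weight A = -1.
  rewrite /cycle_weight big_nat_cond big1 ?mulr1.
    by rewrite /corner mxE !inordK //= (gtn_eqF m_gt0) eqxx.
  move=> k /andP[/andP[_ km] _]; rewrite /super_at mxE !inordK ?(ltn_eqF (ltnSn k)) ?eqxx //.
  exact: ltnW.
have := horner_diag_poly root_cycle_mx_real m_gt0.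
rewrite /diag_poly diag_seq_eq -r_split weight_eq rmorphB /= rmorphXn /= horner_mx_X horner_mx_C.
by move=> h; rewrite -[A ^+ _](subrK 1%:M) h raddfN /= addNr.
Qed.

End RootCycle.

Theorem theorem4p6 (F : fieldType) (n : nat) (hn : (3 <= n)%N) :
  potentially_nilpotent F (pattern_An n) <-> contains_all_nth_roots_of_unity F n.
Proof.
case: n hn => [//|m] hm; have m_gt0 : (0 < m)%N by exact: ltnW hm.
split.
  move=> [A [A_real [k Ak]]].
  by apply: (roots_of_unity_of_nilpotent A_real m_gt0 (k := k)); rewrite -mxpowE.
move=> [r r_split]; exists (root_cycle_mx m r); split.
  exact: root_cycle_mx_real.
by exists m.+1; rewrite mxpowE root_cycle_mx_nilpotent.
Qed.
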